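(* Let $(X,\rho)$ be a separable metric space, $\mu$ a Radon measure on $X$, and $\{X_i\}_{i=1}^\infty$ a $\mu$-measurable decomposition of $X$. Suppose that for each $i$ there is $\delta_i\in\Upsilon(X_i,\mu)$ with $\|\delta_i\|_{\mathrm{op}}\le1$. Then the linear operator $\delta:\mathrm{Lip}_b(X)\to L^\infty(X,\mu)$, $\delta f=\sum_{i=1}^\infty\chi_{X_i}\,\delta_i(f|_{X_i})$, is a derivation in $\Upsilon(X,\mu)$ with $\|\delta\|_{\mathrm{op}}\le1$.
   Context: A collection $\{X_i\}$ of $\mu$-measurable sets is a $\mu$-measurable decomposition if $\mu$ is concentrated on $\bigcup_iX_i$ and $\mu(X_i\cap X_j)=0$ for $i\ne j$. For a metric space $Y$ with Borel measure $\mu$, $\mathrm{Lip}_b(Y)$ is the space of bounded Lipschitz functions with norm $\|f\|_{\mathrm{Lip}}=\max(\sup|f|,L(f))$; a derivation is a linear map $\delta:\mathrm{Lip}_b(Y)\to L^\infty(Y,\mu)$ with the Leibniz rule $\delta(fg)=f\delta g+g\delta f$ and such that whenever a net $(f_\alpha)$ with $\sup\|f_\alpha\|_{\mathrm{Lip}}<\infty$ converges pointwise to $f$, $\delta f_\alpha\to\delta f$ weak-* in $L^\infty(Y,\mu)$; $\Upsilon(Y,\mu)$ is the set of derivations, and $\Upsilon(X_i,\mu)$ refers to the subspace $X_i$ with the restricted metric and measure. $\|\delta\|_{\mathrm{op}}=\sup\{\|\delta f\|_{L^\infty}:\|f\|_{\mathrm{Lip}}\le1\}$. *)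

From HB Require Import structures.
From mathcomp Require Import all_boot all_order all_algebra.
From mathcomp Require Import all_classical all_reals all_analysis.
Set Implicit Arguments. Unset Strict Implicit. Unset Printing Implicit Defensive.
Import Order.TTheory GRing.Theory Num.Theory.
Import numFieldNormedType.Exports.
Local Open Scope classical_set_scope.
Local Open Scope ring_scope.

Section MetricDefs.
Context {R : realType} {T : Type} (rho : T -> T -> R).

Definition is_metric : Prop :=
  (forall x y, 0 <= rho x y) /\ (forall x y, rho x y = 0 <-> x = y) /\
  (forall x y, rho x y = rho y x) /\
  (forall x y z, rho x z <= rho x y + rho y z).

Definition separable : Prop :=
  exists D : set T, countable D /\
    forall x (e : R), 0 < e -> exists2 y, D y & rho x y < e.

Definition mball (x : T) (r : R) : set T := [set y | rho x y < r].

Definition mopen (U : set T) : Prop :=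
  forall x, U x -> exists2 r : R, 0 < r & mball x r `<=` U.

Definition mcompact (K : set T) : Prop :=
  forall (I : Type) (U : I -> set T), (forall i, mopen (U i)) ->
    K `<=` \bigcup_i U i ->
    exists2 J : set I, finite_set J & K `<=` \bigcup_(i in J) U i.

Definition mborel : set (set T) := <<s mopen >>.

Definition sup_le (A : set T) (f : T -> R) (M : R) : Prop :=
  forall x, A x -> `|f x| <= M.
Definition lip_le (A : set T) (f : T -> R) (L : R) : Prop :=
  forall x y, A x -> A y -> `|f x - f y| <= L * rho x y.
(* ||f|_A||_Lip = max(sup |f|, L(f)) <= c *)
Definition lipnorm_le (A : set T) (f : T -> R) (c : R) : Prop :=
  sup_le A f c /\ lip_le A f c.
Definition lipb (A : set T) (f : T -> R) : Prop := exists c, lipnorm_le A f c.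

End MetricDefs.

Definition directed (I : Type) (le : I -> I -> Prop) : Prop :=
  (exists i : I, True) /\ (forall i, le i i) /\
  (forall i j k, le i j -> le j k -> le i k) /\
  (forall i j, exists k, le i k /\ le j k).

Definition net_cvg {R : realType} (I : Type) (le : I -> I -> Prop)
  (u : I -> R) (l : R) : Prop :=
  forall e : R, 0 < e -> exists i0, forall i, le i0 i -> `|u i - l| < e.

Section MeasureDefs.
Context {d : measure_display} {T : measurableType d} {R : realType}.
Variables (rho : T -> T -> R) (mu : {measure set T -> \bar R}).

Definition radon : Prop :=
  (forall x, exists2 U, mopen rho U /\ U x & (mu U < +oo)%E) /\
  (forall A, measurable A ->
     mu A = ereal_sup [set mu K | K in [set K | mcompact rho K /\ K `<=` A]]).

(* the sigma-algebra of T is the sigma-algebra of mu-measurable sets,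
   i.e. the mu-completion of the Borel sets of (T, rho) *)
Definition mu_measurable_sets : Prop :=
  forall A : set T, measurable A <->
    exists B C, [/\ mborel rho B, mborel rho C, B `<=` A, A `<=` C &
                    mu (C `\` B) = 0%E].

Definition measurable_decomposition (X : nat -> set T) : Prop :=
  (forall i, measurable (X i)) /\
  mu (~` \bigcup_i X i) = 0%E /\
  (forall i j, i <> j -> mu (X i `&` X j) = 0%E).

(* Elements of Lip_b(A) are represented by functions T -> R (only values on A
   matter); elements of L^oo(A, mu) by functions T -> R modulo mu-a.e.
   equality on A. *)
Definition ae_on (A : set T) (P : T -> Prop) : Prop :=
  {ae mu, forall x, A x -> P x}.

Definition Linfty (A : set T) (g : T -> R) : Prop :=
  measurable_fun A g /\ exists M : R, ae_on A (fun x => `|g x| <= M).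

Definition L1 (A : set T) (g : T -> R) : Prop :=
  mu.-integrable A (EFin \o g).

Definition derivation (A : set T) (delta : (T -> R) -> (T -> R)) : Prop :=
  [/\
   (* well defined on Lip_b(A): depends only on f|_A *)
   (forall f g, lipb rho A f -> lipb rho A g -> (forall x, A x -> f x = g x) ->
      ae_on A (fun x => delta f x = delta g x)),
   (forall f, lipb rho A f -> Linfty A (delta f)),
   (forall f g (a b : R), lipb rho A f -> lipb rho A g ->
      ae_on A (fun x => delta (fun y => a * f y + b * g y) x
                        = a * delta f x + b * delta g x)),
   (forall f g, lipb rho A f -> lipb rho A g ->
      ae_on A (fun x => delta (fun y => f y * g y) x
                        = f x * delta g x + g x * delta f x)) &
   (* weak-* continuity along bounded pointwise convergent nets *)
   (forall (I : Type) (le : I -> I -> Prop) (F : I -> T -> R) (f : T -> R),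
      directed le ->
      (exists C : R, forall i, lipnorm_le rho A (F i) C) ->
      (forall x, A x -> net_cvg le (fun i => F i x) (f x)) ->
      forall g, L1 A g ->
        net_cvg le
          (fun i => fine (\int[mu]_(x in A) (g x * delta (F i) x)%:E))
          (fine (\int[mu]_(x in A) (g x * delta f x)%:E)))].

Definition opnorm_le1 (A : set T) (delta : (T -> R) -> (T -> R)) : Prop :=
  forall f, lipnorm_le rho A f 1 -> ae_on A (fun x => `|delta f x| <= 1).

Definition glued_derivation (X : nat -> set T)
  (deltas : nat -> (T -> R) -> (T -> R)) : (T -> R) -> (T -> R) :=
  fun f x => limn (fun n => \sum_(0 <= i < n) (\1_(X i) x * deltas i f x)).

End MeasureDefs.

From HB Require Import structures.
From mathcomp Require Import all_boot all_order all_algebra.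
From mathcomp Require Import all_classical all_reals all_analysis.
Set Implicit Arguments. Unset Strict Implicit. Unset Printing Implicit Defensive.
Import Order.TTheory GRing.Theory Num.Theory.
Import numFieldNormedType.Exports.
From mathcomp Require Import ring lra.
From mathcomp Require Import measurable_realfun.
Local Open Scope classical_set_scope.
Local Open Scope ring_scope.

(* Almost every point lies in exactly one piece X_j, and there the glued
   operator coincides with delta_j; hence measurability, the L^oo bound,
   linearity, the Leibniz rule and the operator-norm bound all transfer
   piecewise, off a null set.  Weak-* continuity is an eps/3 argument: for
   g in L^1 split the integral of g * delta(F_i) into the finitely many pieces
   X_0, ..., X_(n-1), on each of which delta_j is weak-* continuous, plus a
   tail whose integral is uniformly small because |delta(F_i)| <= C + 1 and
   the tail mass of |g| tends to 0 (dominated convergence). *)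

Section Nets.
Variables (I : Type) (le : I -> I -> Prop).
Hypothesis le_directed : directed le.

Definition net_eventually (P : I -> Prop) : Prop :=
  exists i0, forall i, le i0 i -> P i.

Lemma net_eventuallyI (P Q : I -> Prop) :
  net_eventually P -> net_eventually Q -> net_eventually (fun i => P i /\ Q i).
Proof.
case: le_directed => _ [_ [le_trans' le_up]] [i1 H1] [i2 H2].
have [k [k1 k2]] := le_up i1 i2.
by exists k => i ki; split; [apply: H1|apply: H2]; exact: le_trans' ki.
Qed.

Lemma net_eventually_forall_ltn (P : nat -> I -> Prop) n :
  (forall j, (j < n)%N -> net_eventually (P j)) ->
  net_eventually (fun i => forall j, (j < n)%N -> P j i).
Proof.
elim: n => [|n IH] H.
  by case: le_directed => [[i0 _] _]; exists i0 => i _ j.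
have [i0 Hi] := net_eventuallyI (IH (fun j jn => H j (ltnW jn))) (H n (ltnSn n)).
exists i0 => i /Hi [h1 h2] j; rewrite ltnS leq_eqVlt.
by case/orP => [/eqP ->|]; [exact: h2|exact: h1].
Qed.

End Nets.

Section LipschitzNorm.
Context {R : realType} {T : Type}.
Variable rho : T -> T -> R.

Lemma lipnorm_le_subset (A B : set T) f c :
  A `<=` B -> lipnorm_le rho B f c -> lipnorm_le rho A f c.
Proof.
by move=> AB [h1 h2]; split => [x Ax|x y Ax Ay]; [apply: h1|apply: h2]; apply: AB.
Qed.

Lemma lipb_subset (A B : set T) f : A `<=` B -> lipb rho B f -> lipb rho A f.
Proof. by move=> AB [c h]; exists c; apply: lipnorm_le_subset h. Qed.

Lemma lipnorm_le_net_limit (I : Type) (le : I -> I -> Prop) (A : set T)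
    (F : I -> T -> R) f C :
  directed le -> (forall i, lipnorm_le rho A (F i) C) ->
  (forall x, A x -> net_cvg le (fun i => F i x) (f x)) ->
  lipnorm_le rho A f C.
Proof.
move=> [_ [le_refl [_ le_up]]] hF hc; split.
  move=> x Ax; apply/ler_addgt0Pr => e e0.
  have [i0 Hi] := hc x Ax e e0; have := Hi i0 (le_refl i0).
  have := (hF i0).1 x Ax => h1 h2.
  have -> : f x = F i0 x - (F i0 x - f x) by ring.
  by apply: (le_trans (ler_normB _ _)); apply: lerD => //; exact: ltW.
move=> x y Ax Ay; apply/ler_addgt0Pr => e e0.
have e20 : 0 < e / 2 by rewrite divr_gt0.
have [ix Hx] := hc x Ax _ e20; have [iy Hy] := hc y Ay _ e20.
have [k [kx ky]] := le_up ix iy.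
have hx := Hx k kx; have hy := Hy k ky.
have -> : f x - f y = (F k x - F k y) + ((F k y - f y) - (F k x - f x)) by ring.
apply: (le_trans (ler_normD _ _)); apply: lerD; first exact: (hF k).2.
apply: (le_trans (ler_normB _ _)).
have -> : e = e / 2 + e / 2 by field.
by apply: lerD; apply: ltW.
Qed.

End LipschitzNorm.

Section RealIntegrals.
Context {d : measure_display} {T : measurableType d} {R : realType}.
Variable mu : {measure set T -> \bar R}.

Lemma Rintegral_ae_eq D (f1 f2 : T -> R) : measurable D ->
  measurable_fun D f1 -> measurable_fun D f2 ->
  ae_on mu D (fun x => f1 x = f2 x) -> Rintegral mu D f1 = Rintegral mu D f2.
Proof.
move=> mD m1 m2 H; congr fine; apply: ae_eq_integral => //.
- exact/measurable_EFinP.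
- exact/measurable_EFinP.
- by move: H; rewrite /ae_on; apply: filterS => x h Dx; rewrite /= h.
Qed.

Lemma Rintegral_le_ae D (f1 f2 : T -> R) : measurable D ->
  mu.-integrable D (EFin \o f1) -> mu.-integrable D (EFin \o f2) ->
  (forall x, D x -> 0 <= f1 x) -> (forall x, D x -> 0 <= f2 x) ->
  ae_on mu D (fun x => f1 x <= f2 x) -> Rintegral mu D f1 <= Rintegral mu D f2.
Proof.
move=> mD i1 i2 p1 p2 H.
apply: fine_le; [exact: integrable_fin_num|exact: integrable_fin_num|].
apply: ae_ge0_le_integral => //; [exact: measurable_int i1|exact: measurable_int i2].
Qed.

Lemma integrableZl_real D (g : T -> R) (k : R) : measurable D ->
  mu.-integrable D (EFin \o g) -> mu.-integrable D (EFin \o (fun x => k * g x)).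
Proof.
move=> mD ig; have := integrableZl mD k ig.
by apply: eq_integrable => // x _; rewrite /= EFinM.
Qed.

Lemma integrable_mul_ae_bounded D (g h : T -> R) (M : R) : measurable D ->
  measurable_fun D h -> ae_on mu D (fun x => `|h x| <= M) ->
  mu.-integrable D (EFin \o g) -> mu.-integrable D (EFin \o (fun x => g x * h x)).
Proof.
move=> mD mh hM ig.
have mg : measurable_fun D g by apply/measurable_EFinP; exact: measurable_int ig.
have mgh : measurable_fun D (fun x => g x * h x) by exact: measurable_funM.
case/integrableP: (integrableZl mD `|M| (integrable_abse ig)) => _ fin_int.
apply/integrableP; split; first exact/measurable_EFinP.
apply: le_lt_trans fin_int; apply: ae_ge0_le_integral => //.
- by apply: measurableT_comp => //; exact/measurable_EFinP.
- apply: measurableT_comp => //; apply: emeasurable_funM => //.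
  by apply: measurableT_comp => //; exact/measurable_EFinP.
move: hM; rewrite /ae_on; apply: filterS => x hx Dx; move: (hx Dx) => {}hx.
rewrite /= lee_fin normrM [X in _ <= X]ger0_norm ?mulr_ge0 // mulrC.
by apply: ler_wpM2r => //; exact: le_trans hx (ler_norm _).
Qed.

Lemma integrable_patch A (phi : T -> R) : measurable A ->
  mu.-integrable setT (EFin \o phi) -> mu.-integrable setT (EFin \o (phi \_ A)).
Proof.
move=> mA ig.
have := (integrable_mkcond _ mA).1 (integrableS measurableT mA (@subsetT _ A) ig).
by apply: eq_integrable => // x _; rewrite restrict_EFin.
Qed.

Lemma measurable_patch A (phi : T -> R) : measurable A ->
  measurable_fun setT phi -> measurable_fun setT (phi \_ A).
Proof.
by move=> mA mp; apply/(measurable_restrictT _ mA); exact: measurable_funS mp.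
Qed.

End RealIntegrals.

Section DerivationBound.
Context {d : measure_display} {T : measurableType d} {R : realType}.
Variables (rho : T -> T -> R) (mu : {measure set T -> \bar R}).
Hypothesis rho_ge0 : forall x y, 0 <= rho x y.

(* Scale f by 1/(|c| + 1) to reach the unit ball of Lip_b, then use linearity. *)
Lemma derivation_lipnorm_bound A (delta : (T -> R) -> T -> R) f c :
  derivation rho mu A delta -> opnorm_le1 rho mu A delta ->
  lipnorm_le rho A f c -> ae_on mu A (fun x => `|delta f x| <= `|c| + 1).
Proof.
move=> [_ _ delta_lin _ _] delta_op [hs hl].
have c'0 : 0 < `|c| + 1 by rewrite ltr_wpDl.
set c' := `|c| + 1 in c'0 *.
have cc' : c <= c' by rewrite (le_trans (ler_norm _))// lerDl.
have ic0 : 0 < c'^-1 by rewrite invr_gt0.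
have unit_f : lipnorm_le rho A (fun y => c'^-1 * f y + 0 * f y) 1.
  split.
    move=> x Ax; rewrite mul0r addr0 normrM gtr0_norm //.
    rewrite -(mulVf (lt0r_neq0 c'0)); apply: ler_wpM2l; first exact: ltW.
    exact: le_trans (hs x Ax) cc'.
  move=> x y Ax Ay; rewrite !mul0r !addr0 -mulrBr normrM gtr0_norm //.
  rewrite -[X in _ <= X * _](mulVf (lt0r_neq0 c'0)) -mulrA.
  apply: ler_wpM2l; first exact: ltW.
  by apply: (le_trans (hl x y Ax Ay)); exact: ler_wpM2r.
have lf : lipb rho A f by exists c.
have := delta_op _ unit_f; have := delta_lin f f c'^-1 0 lf lf.
rewrite /ae_on; apply: filterS2 => x h1 h2 Ax; move: (h2 Ax).
rewrite (h1 Ax) mul0r addr0 normrM gtr0_norm // => h.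
by rewrite -(ler_pM2l ic0) mulVf ?lt0r_neq0.
Qed.

End DerivationBound.

Section Completeness.
Context {d : measure_display} {T : measurableType d} {R : realType}.
Variables (rho : T -> T -> R) (mu : {measure set T -> \bar R}).
Hypothesis mu_meas : mu_measurable_sets rho mu.

Lemma mborel_measurable B : mborel rho B -> measurable B.
Proof. by move=> hB; apply/mu_meas; exists B, B; split; rewrite ?setDv ?measure0. Qed.

Lemma measurable_subset_null N A :
  measurable N -> mu N = 0%E -> A `<=` N -> measurable A.
Proof.
move=> mN N0 AN; have [B [C [bB bC BN NC CB0]]] := (mu_meas N).1 mN.
have mB := mborel_measurable bB; have mC := mborel_measurable bC.
have C0 : mu C = 0%E.
  have -> : mu C = (mu (C `\` B) + mu (C `&` B))%E by apply: measureDI.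
  rewrite CB0 add0e.
  apply/eqP; rewrite -measure_le0 -N0; apply: le_measure; rewrite ?inE //.
    exact: measurableI.
  by move=> x [_ /BN].
apply/mu_meas; exists set0, C; split => //.
- exact: sigma_algebra0.
- exact: subset_trans NC.
- by rewrite setD0.
Qed.

End Completeness.

Section Decomposition.
Context {d : measure_display} {T : measurableType d} {R : realType}.
Variables (mu : {measure set T -> \bar R}) (X : nat -> set T).
Hypothesis X_dec : measurable_decomposition mu X.

Definition in_unique_piece x : Prop :=
  (exists j, X j x) /\ (forall i j, X i x -> X j x -> i = j).

Lemma ae_in_unique_piece : {ae mu, forall x, in_unique_piece x}.
Proof.
case: X_dec => mX [cover0 disj0].
have covered : {ae mu, forall x, (\bigcup_i X i) x}.
  exists (~` \bigcup_i X i); split => //.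
  by apply: measurableC; exact: bigcupT_measurable.
have disjoint : {ae mu, forall x, forall i j, i <> j -> ~ (X i x /\ X j x)}.
  apply: ae_foralln => i; apply: ae_foralln => j.
  have [->|ij] := eqVneq i j; first by apply: aeW => x; exact.
  exists (X i `&` X j); split; first exact: measurableI.
    by apply: disj0; apply/eqP.
  by move=> x /= H; apply: contrapT => K; apply: H => _.
apply: filterS2 covered disjoint => x [j _ Xj] H; split; first by exists j.
by move=> i k Xi Xk; apply: contrapT => ik; exact: (H i k ik).
Qed.

Lemma ae_on_glue (P : T -> Prop) (Q : nat -> T -> Prop) :
  (forall j, ae_on mu (X j) (Q j)) ->
  (forall x j, in_unique_piece x -> X j x -> Q j x -> P x) -> ae_on mu setT P.
Proof.
move=> HQ HP.
have := @ae_foralln _ _ _ mu (fun j x => X j x -> Q j x) HQ.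
move=> H; apply: filterS2 H ae_in_unique_piece => x H ux _.
by case: (ux) => [[j Xj] _]; apply: (HP x j) => //; apply: H.
Qed.

Lemma glued_derivationE (deltas : nat -> (T -> R) -> T -> R) f x j :
  in_unique_piece x -> X j x -> glued_derivation X deltas f x = deltas j f x.
Proof.
move=> [_ ux] Xj; apply: cvg_lim => //; apply: cvg_near_cst; near=> n.
have jn : (j < n)%N by near: n; exists j.+1.
rewrite (bigD1_seq j) ?mem_index_iota ?iota_uniq //= big1 ?addr0.
  by rewrite indicE mem_set // mul1r.
move=> i ij; rewrite indicE; have [Xi|nXi] := boolP (x \in X i); last first.
  by rewrite mul0r.
by move: ij; rewrite (ux _ _ (set_mem Xi) Xj) eqxx.
Unshelve. all: by end_near. Qed.

Definition first_pieces n : set T := \bigcup_(j in [set j | (j < n)%N]) X j.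

Lemma measurable_first_pieces n : measurable (first_pieces n).
Proof. by apply: bigcup_measurable => j _; exact: X_dec.1. Qed.

Lemma patch_not_first_pieces_succ (phi : T -> R) n :
  ae_on mu setT (fun x => (phi \_ (~` first_pieces n)) x =
    (phi \_ (X n) \+ phi \_ (~` first_pieces n.+1)) x).
Proof.
apply: filterS ae_in_unique_piece => x [_ ux] _; rewrite /= !patchE.
have [Xn|nXn] := pselect (X n x).
  have nV : ~ first_pieces n x.
    by case=> j /= jn Xj; move: jn; rewrite (ux _ _ Xj Xn) ltnn.
  have V1 : first_pieces n.+1 x by exists n => /=.
  rewrite (mem_set Xn) (mem_set (nV : (~` first_pieces n) x)).
  by rewrite memNset ?addr0 //= => /(_ V1).
rewrite (memNset nXn) add0r.
have [Vx|nVx] := pselect (first_pieces n x).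
  rewrite !memNset //= => h; apply: h; case: Vx => j jn Xj; exists j => //=.
  exact: ltnW.
have nV1 : ~ first_pieces n.+1 x.
  case=> j /=; rewrite ltnS leq_eqVlt => /orP [/eqP -> //|jn Xj].
  by apply: nVx; exists j.
by rewrite (mem_set (nV1 : (~` first_pieces n.+1) x)) (mem_set (nVx : (~` _) x)).
Qed.

Lemma Rintegral_split_first_pieces (phi : T -> R) n :
  mu.-integrable setT (EFin \o phi) ->
  Rintegral mu setT phi =
    \sum_(j < n) Rintegral mu (X j) phi + Rintegral mu (~` first_pieces n) phi.
Proof.
move=> ig; have mp : measurable_fun setT phi.
  by apply/measurable_EFinP; exact: measurable_int ig.
have mV' k := measurableC (measurable_first_pieces k).
elim: n => [|n IH].
  rewrite big_ord0 add0r; congr Rintegral.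
  by apply/seteqP; split => x // _ [j]; rewrite /= ltn0.
rewrite big_ord_recr IH -addrA; congr (_ + _).
rewrite (Rintegral_mkcond mu (~` first_pieces n)) (Rintegral_mkcond mu (X _)).
rewrite (Rintegral_mkcond mu (~` first_pieces n.+1)) -RintegralD //; last first.
- exact: integrable_patch (mV' _) ig.
- exact: integrable_patch (X_dec.1 _) ig.
apply: Rintegral_ae_eq => //; first exact: measurable_patch.
- by apply: measurable_funD; apply: measurable_patch => //; exact: (X_dec.1 _).
- exact: patch_not_first_pieces_succ.
Qed.

Lemma Rintegral_tail_small (g : T -> R) e :
  mu.-integrable setT (EFin \o g) -> 0 < e ->
  exists n, Rintegral mu (~` first_pieces n) (fun x => `|g x|) < e.
Proof.
move=> ig e0; have mg : measurable_fun setT g.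
  by apply/measurable_EFinP; exact: measurable_int ig.
pose tail n := EFin \o ((fun x => `|g x|) \_ (~` first_pieces n)).
have mtail n : measurable_fun setT (tail n).
  apply/measurable_EFinP; apply: measurable_patch.
    exact: measurableC (measurable_first_pieces _).
  exact: measurableT_comp.
have tail_cvg0 :
    {ae mu, forall x, setT x -> tail ^~ x @ \oo --> (cst 0%E : T -> \bar R) x}.
  apply: filterS ae_in_unique_piece => x [[j Xj] _] _.
  apply: cvg_near_cst; near=> n.
  have jn : (j < n)%N by near: n; exists j.+1.
  by rewrite /tail /= patchE memNset //= => h; apply: h; exists j.
have tail_dom : {ae mu, forall y n, setT y ->
    (`|tail n y| <= (EFin \o (fun z => `|g z|%R)) y)%E}.
  apply: aeW => y m _; rewrite /tail /= patchE; case: ifP => _.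
    by rewrite lee_fin normr_id.
  by rewrite lee_fin normr0.
have [_ _] := dominated_convergence measurableT mtail (measurable_cst _)
  tail_cvg0 (integrable_norm ig) tail_dom.
rewrite integral0 => /fine_cvgP [_] /cvgrPdist_lt /(_ e e0) [N _ HN].
exists N; have := HN N (leqnn N); rewrite sub0r normrN.
rewrite (Rintegral_mkcond mu (~` first_pieces N)) /Rintegral /=.
by move=> h; apply: le_lt_trans h; exact: ler_norm.
Unshelve. all: by end_near. Qed.

End Decomposition.

Section Glued.
Context {d : measure_display} {T : measurableType d} {R : realType}.
Variables (rho : T -> T -> R) (mu : {measure set T -> \bar R}).
Variables (X : nat -> set T) (deltas : nat -> (T -> R) -> (T -> R)).
Hypothesis rho_ge0 : forall x y, 0 <= rho x y.
Hypothesis mu_meas : mu_measurable_sets rho mu.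
Hypothesis X_dec : measurable_decomposition mu X.
Hypothesis deltas_der : forall i,
  derivation rho mu (X i) (deltas i) /\ opnorm_le1 rho mu (X i) (deltas i).

Local Notation delta := (glued_derivation X deltas).

Lemma measurable_deltas j f : lipb rho setT f -> measurable_fun (X j) (deltas j f).
Proof.
move=> lf; case: (deltas_der j) => [[_ hL _ _ _] _].
by case: (hL f (lipb_subset (@subsetT _ _) lf)).
Qed.

(* Off the null set where x is not in a unique piece, delta f agrees with the
   measurable deltas j f on X j; the null set itself is measurable by
   completeness of mu. *)
Lemma measurable_glued f : lipb rho setT f -> measurable_fun setT (delta f).
Proof.
move=> lf _ B mB; have [N [mN N0 Nc]] := ae_in_unique_piece X_dec.
have uN x : ~ N x -> in_unique_piece X x.
  by move=> xN; apply: contrapT => h; apply: xN; apply: Nc.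
have -> : setT `&` delta f @^-1` B = (N `&` delta f @^-1` B) `|`
    \bigcup_j ((X j `&` deltas j f @^-1` B) `&` ~` N).
  apply/seteqP; split => x.
    move=> [_ /= hB]; have [xN|xN] := pselect (N x); first by left.
    have [[j Xj] _] := uN x xN; right; exists j => //; split => //; split => //.
    by rewrite /= -(glued_derivationE _ _ (uN x xN) Xj).
  move=> [[_ hB]|[j _ [[Xj hB] xN]]]; split => //.
  by rewrite /= (glued_derivationE _ _ (uN x xN) Xj).
apply: measurableU; first by apply: (measurable_subset_null mu_meas mN N0) => x [].
apply: bigcupT_measurable => j; apply: measurableI; last exact: measurableC.
by apply: measurable_deltas => //; exact: X_dec.1.
Qed.

Lemma glued_lipnorm_bound f c : lipnorm_le rho setT f c ->
  ae_on mu setT (fun x => `|delta f x| <= `|c| + 1).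
Proof.
move=> lf; apply: (ae_on_glue X_dec (Q := fun j x => `|deltas j f x| <= `|c| + 1)).
  move=> j; case: (deltas_der j) => [Dj Oj].
  by apply: derivation_lipnorm_bound Dj Oj _ => //; exact: lipnorm_le_subset lf.
by move=> x j ux Xj; rewrite (glued_derivationE _ _ ux Xj).
Qed.

Lemma glued_Linfty f : lipb rho setT f -> Linfty mu setT (delta f).
Proof.
move=> lf; split; first exact: measurable_glued.
by case: lf => c lc; exists (`|c| + 1); exact: glued_lipnorm_bound.
Qed.

Lemma glued_linear f g (a b : R) : lipb rho setT f -> lipb rho setT g ->
  ae_on mu setT (fun x =>
    delta (fun y => a * f y + b * g y) x = a * delta f x + b * delta g x).
Proof.
move=> lf lg; apply: (ae_on_glue X_dec (Q := fun j x =>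
  deltas j (fun y => a * f y + b * g y) x = a * deltas j f x + b * deltas j g x)).
  move=> j; case: (deltas_der j) => [[_ _ hlin _ _] _].
  by apply: hlin; apply: lipb_subset (@subsetT _ _) _.
by move=> x j ux Xj; rewrite !(glued_derivationE _ _ ux Xj).
Qed.

Lemma glued_Leibniz f g : lipb rho setT f -> lipb rho setT g ->
  ae_on mu setT (fun x =>
    delta (fun y => f y * g y) x = f x * delta g x + g x * delta f x).
Proof.
move=> lf lg; apply: (ae_on_glue X_dec (Q := fun j x =>
  deltas j (fun y => f y * g y) x = f x * deltas j g x + g x * deltas j f x)).
  move=> j; case: (deltas_der j) => [[_ _ _ hleib _] _].
  by apply: hleib; apply: lipb_subset (@subsetT _ _) _.
by move=> x j ux Xj; rewrite !(glued_derivationE _ _ ux Xj).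
Qed.

Lemma glued_opnorm_le1 : opnorm_le1 rho mu setT delta.
Proof.
move=> f lf; apply: (ae_on_glue X_dec (Q := fun j x => `|deltas j f x| <= 1)).
  move=> j; case: (deltas_der j) => [_ Oj]; apply: Oj.
  exact: lipnorm_le_subset lf.
by move=> x j ux Xj; rewrite (glued_derivationE _ _ ux Xj).
Qed.

Lemma integrable_mul_glued (g h : T -> R) c : lipnorm_le rho setT h c ->
  mu.-integrable setT (EFin \o g) ->
  mu.-integrable setT (EFin \o (fun x => g x * delta h x)).
Proof.
move=> hh ig; apply: integrable_mul_ae_bounded measurableT _ _ ig.
  by apply: measurable_glued; exists c.
exact: glued_lipnorm_bound hh.
Qed.

Lemma Rintegral_glued_piece (g h : T -> R) j :
  measurable_fun setT g -> lipb rho setT h ->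
  Rintegral mu (X j) (fun x => g x * delta h x) =
  Rintegral mu (X j) (fun x => g x * deltas j h x).
Proof.
move=> mg lh; have mX := X_dec.1 j.
have mgX : measurable_fun (X j) g by exact: measurable_funS mg.
apply: Rintegral_ae_eq => //.
- apply: measurable_funM => //.
  by apply: measurable_funS (measurable_glued lh).
- by apply: measurable_funM => //; exact: measurable_deltas.
- apply: filterS (ae_in_unique_piece X_dec) => x ux Xj.
  by rewrite (glued_derivationE _ _ ux Xj).
Qed.

Lemma Rintegral_glued_split (g h : T -> R) c n :
  lipnorm_le rho setT h c -> mu.-integrable setT (EFin \o g) ->
  Rintegral mu setT (fun x => g x * delta h x) =
    \sum_(j < n) Rintegral mu (X j) (fun x => g x * deltas j h x) +
    Rintegral mu (~` first_pieces X n) (fun x => g x * delta h x).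
Proof.
move=> hh ig; rewrite (Rintegral_split_first_pieces X_dec n (integrable_mul_glued hh ig)).
congr (_ + _); apply: eq_bigr => j _; apply: Rintegral_glued_piece; last by exists c.
by apply/measurable_EFinP; exact: measurable_int ig.
Qed.

Lemma Rintegral_glued_tail_le (g h : T -> R) c n :
  lipnorm_le rho setT h c -> mu.-integrable setT (EFin \o g) ->
  `|Rintegral mu (~` first_pieces X n) (fun x => g x * delta h x)| <=
  (`|c| + 1) * Rintegral mu (~` first_pieces X n) (fun x => `|g x|).
Proof.
move=> hh ig.
have mA := measurableC (measurable_first_pieces X_dec n).
have iA := integrableS measurableT mA (@subsetT _ _) (integrable_mul_glued hh ig).
have igA := integrableS measurableT mA (@subsetT _ _) ig.
apply: le_trans (le_normr_Rintegral mA iA) _.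
rewrite -RintegralZl //; last exact: integrable_norm.
apply: Rintegral_le_ae => //.
- exact: integrable_norm.
- by apply: integrableZl_real => //; exact: integrable_norm.
have := glued_lipnorm_bound hh; rewrite /ae_on; apply: filterS => x hx _.
by rewrite normrM mulrC; apply: ler_wpM2r => //; exact: hx.
Qed.

Lemma glued_weak_star_continuous (I : Type) (le : I -> I -> Prop)
    (F : I -> T -> R) (f : T -> R) :
  directed le -> (exists C, forall i, lipnorm_le rho setT (F i) C) ->
  (forall x, setT x -> net_cvg le (fun i => F i x) (f x)) ->
  forall g, L1 mu setT g ->
  net_cvg le (fun i => fine (\int[mu]_(x in setT) (g x * delta (F i) x)%:E))
             (fine (\int[mu]_(x in setT) (g x * delta f x)%:E)).
Proof.
move=> dir [C hF] hc g ig e e0.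
have hf := lipnorm_le_net_limit dir hF hc.
have B0 : 0 < `|C| + 1 by rewrite ltr_wpDl.
pose piece j h := Rintegral mu (X j) (fun x => g x * deltas j h x).
pose tail h n := Rintegral mu (~` first_pieces X n) (fun x => g x * delta h x).
have e30 : 0 < e / 3 by rewrite divr_gt0.
have [n small_tail] := Rintegral_tail_small X_dec ig (divr_gt0 e30 B0).
have tail_lt h : lipnorm_le rho setT h C -> `|tail h n| < e / 3.
  move=> hh; apply: le_lt_trans (Rintegral_glued_tail_le n hh ig) _.
  have -> : e / 3 = (`|C| + 1) * (e / 3 / (`|C| + 1)) by field; exact: lt0r_neq0.
  by rewrite ltr_pM2l.
pose c := e / 3 / n.+1%:R. (* n.+1 rather than n, which may be 0 *)
have [i0 pieces_close] :
    net_eventually le (fun i => forall j, (j < n)%N -> `|piece j (F i) - piece j f| < c).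
  apply: net_eventually_forall_ltn => // j _.
  case: (deltas_der j) => [[_ _ _ _ hcont] _].
  apply: (hcont I le F f dir _ _ g _ c) => //.
  - by exists C => i; apply: lipnorm_le_subset (hF i).
  - by move=> x _; apply: hc.
  - exact: integrableS measurableT (X_dec.1 j) (@subsetT _ _) ig.
  - by rewrite divr_gt0.
exists i0 => i li.
change (`|Rintegral mu setT (fun x => g x * delta (F i) x) -
         Rintegral mu setT (fun x => g x * delta f x)| < e).
rewrite (Rintegral_glued_split n (hF i) ig) (Rintegral_glued_split n hf ig).
rewrite -/(tail (F i) n) -/(tail f n).
have -> : \sum_(j < n) piece j (F i) + tail (F i) n - (\sum_(j < n) piece j f + tail f n) =
    \sum_(j < n) (piece j (F i) - piece j f) + (tail (F i) n - tail f n).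
  by rewrite sumrB; ring.
have sum_le : `|\sum_(j < n) (piece j (F i) - piece j f)| <= e / 3.
  apply: le_trans (ler_norm_sum _ _ _) _.
  apply: le_trans (ler_sum _ (fun (j : 'I_n) _ => ltW (pieces_close i li j (ltn_ord j)))) _.
  rewrite sumr_const card_ord -[c *+ n]mulr_natl /c mulrA ler_pdivrMr ?ltr0Sn //.
  by rewrite mulrC ler_pM2l // ler_nat.
have tails := ler_normB (tail (F i) n) (tail f n).
have tF := tail_lt _ (hF i); have tf := tail_lt _ hf.
by apply: le_lt_trans (ler_normD _ _) _; lra.
Qed.

End Glued.

Theorem lemma2p16 (d : measure_display) (T : measurableType d) (R : realType)
  (rho : T -> T -> R) (mu : {measure set T -> \bar R})
  (X : nat -> set T) (deltas : nat -> (T -> R) -> (T -> R)) :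
  is_metric rho -> separable rho ->
  mu_measurable_sets rho mu -> radon rho mu ->
  measurable_decomposition mu X ->
  (forall i, derivation rho mu (X i) (deltas i) /\
             opnorm_le1 rho mu (X i) (deltas i)) ->
  derivation rho mu setT (glued_derivation X deltas) /\
  opnorm_le1 rho mu setT (glued_derivation X deltas).
Proof.
move=> [rho_ge0 _] _ mu_meas _ X_dec deltas_der.
split; last exact: glued_opnorm_le1 X_dec deltas_der.
split.
- move=> f g _ _ fg; have -> : f = g by apply: funext => x; exact: fg.
  exact: aeW.
- by move=> f; apply: glued_Linfty.
- by move=> f g a b; apply: glued_linear.
- by move=> f g; apply: glued_Leibniz.
- by move=> I le F f dir hF hc g; apply: glued_weak_star_continuous.
Qed.
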